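(* Let $\mathbb F$ be a field and $G,F_1,\dots,F_m\in\mathbb F[x_1,\dots,x_n]$. If there is an RIPS certificate that $G\in\sqrt{\langle F_1,\dots,F_m\rangle}$, then there is a Hilbert-like RIPS certificate that $G\in\sqrt{\langle F_1,\dots,F_m\rangle}$.
   Context: RIPS certificate that $G\in\sqrt{\langle F_1,\dots,F_m\rangle}$: a rational function $C(\vec x,\vec y)$ in $\vec x$ and placeholder variables $y_1,\dots,y_m$, written $C=C'/D$ with $C',D$ relatively prime polynomials, such that (0) if $G$ is an invertible constant then $D$ is constant, and otherwise $D(\vec x,\vec F(\vec x))$ does not vanish identically on any irreducible component over $\overline{\mathbb F}$ of $V(F_1,\dots,F_m)$; (1) $C(\vec x,\vec0)=0$; (2) $C(\vec x,F_1(\vec x),\dots,F_m(\vec x))=G(\vec x)$. It is Hilbert-like if it has the form $\frac{1}{D(\vec x)}\sum_iy_iG_i(\vec x)$, i.e. the denominator does not involve the $y_i$ and the numerator is linear in the $y_i$. *)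

From HB Require Import structures.
From mathcomp Require Import all_boot all_order all_algebra.
From mathcomp Require Import mpoly.

Set Implicit Arguments.
Unset Strict Implicit.
Unset Printing Implicit Defensive.

Import Order.TTheory GRing.Theory.
Local Open Scope ring_scope.

Section RIPS.
Variables (F : fieldType) (n m : nat).

(* Polynomials in x_1..x_n, y_1..y_m live in {mpoly F[n + m]};
   x_i is the variable lshift m i, y_j is the variable rshift n j. *)
Definition xvar (i : 'I_n) : {mpoly F[n + m]} := 'X_(lshift m i).
Definition yvar (j : 'I_m) : {mpoly F[n + m]} := 'X_(rshift n j).

Definition liftx (p : {mpoly F[n]}) : {mpoly F[n + m]} :=
  p \mPo [tuple xvar i | i < n].

Definition subst_yF (Fs : 'I_m -> {mpoly F[n]}) (p : {mpoly F[n + m]})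
  : {mpoly F[n]} :=
  p \mPo [tuple match split i with inl a => 'X_a | inr b => Fs b end
         | i < n + m].

Definition subst_y0 (p : {mpoly F[n + m]}) : {mpoly F[n]} :=
  p \mPo [tuple match split i with inl a => 'X_a | inr _ => 0 end
         | i < n + m].

Definition rel_prime (p q : {mpoly F[n + m]}) : Prop :=
  forall d : {mpoly F[n + m]},
    (exists a, p = d * a) -> (exists b, q = d * b) -> d \is a GRing.unit.

Definition inv_const (G : {mpoly F[n]}) : Prop :=
  exists c : F, c != 0 /\ G = c%:MP.

End RIPS.

Section Zariski.
Variables (L : closedFieldType) (n : nat).

Definition pset := ('I_n -> L) -> Prop.

Definition zclosed (S : pset) : Prop :=
  exists P : {mpoly L[n]} -> Prop,
    forall z, S z <-> (forall p, P p -> p.@[z] = 0).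

Definition zirreducible (S : pset) : Prop :=
  [/\ zclosed S, exists z, S z &
      forall S1 S2 : pset, zclosed S1 -> zclosed S2 ->
        (forall z, S z -> S1 z \/ S2 z) ->
        (forall z, S z -> S1 z) \/ (forall z, S z -> S2 z)].

Definition irr_component (V Z : pset) : Prop :=
  [/\ zirreducible Z, (forall z, Z z -> V z) &
      forall Z' : pset, zirreducible Z' -> (forall z, Z' z -> V z) ->
        (forall z, Z z -> Z' z) -> forall z, Z' z -> Z z].

End Zariski.

Definition is_alg_closure (F : fieldType) (L : closedFieldType)
  (iota : {rmorphism F -> L}) : Prop :=
  forall x : L, exists p : {poly F}, p != 0 /\ root (map_poly iota p) x.

Section Cert.
Variables (F : fieldType) (L : closedFieldType) (iota : {rmorphism F -> L}).
Variables (n m : nat).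

Definition variety (Fs : 'I_m -> {mpoly F[n]}) : pset L n :=
  fun z => forall j, (map_mpoly iota (Fs j)).@[z] = 0.

(* (Cn, D) represents C = Cn / D, an RIPS certificate that
   G \in sqrt <F_1, ..., F_m>, irreducible components taken over L. *)
Definition RIPS_cert (G : {mpoly F[n]}) (Fs : 'I_m -> {mpoly F[n]})
  (Cn D : {mpoly F[n + m]}) : Prop :=
  [/\ D != 0, rel_prime Cn D,
      (inv_const G -> exists d : F, D = d%:MP) /\
      (~ inv_const G ->
         forall Z, irr_component (variety Fs) Z ->
           exists z, Z z /\ (map_mpoly iota (subst_yF Fs D)).@[z] != 0),
      subst_y0 D != 0 /\ subst_y0 Cn = 0 &
      subst_yF Fs D != 0 /\ subst_yF Fs Cn = G * subst_yF Fs D].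

(* C = Cn / D has the form (1 / D0(x)) * sum_i y_i G_i(x). *)
Definition hilbert_like (Cn D : {mpoly F[n + m]}) : Prop :=
  exists (D0 : {mpoly F[n]}) (Gs : 'I_m -> {mpoly F[n]}),
    D0 != 0 /\
    Cn * @liftx F n m D0 = D * \sum_(i < m) @yvar F n m i * @liftx F n m (Gs i).

End Cert.

From HB Require Import structures.
From mathcomp Require Import all_boot all_order all_algebra.
From mathcomp Require Import mpoly.
From mathcomp Require Import ring.
From Stdlib Require Import Classical.

Set Implicit Arguments.
Unset Strict Implicit.
Unset Printing Implicit Defensive.

Import GRing.Theory.
Local Open Scope ring_scope.

(* Since C(x, 0) = 0, the numerator satisfies C'(x, F(x)) = C'(x, F(x)) - C'(x, 0)
   in <F_1, ..., F_m>, so G * D(x, F(x)) = sum_i F_i G_i for some G_i, and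
   (sum_i y_i G_i) / D(x, F(x)) is a Hilbert-like candidate: it vanishes at y = 0,
   evaluates to G at y = F(x), and its denominator is the old one evaluated at
   y = F(x), which is constant, resp. nonvanishing on the components, whenever D is.
   It remains to make numerator and denominator coprime.  A common factor d of
   sum_i y_i G_i and of the x-only D0 is itself x-only (for the grading by total
   degree in y, a factor of a polynomial of y-degree 0 has y-degree 0), so it
   divides D0 and every G_i; cancelling it keeps all the properties above and
   strictly lowers the size of D0 unless d is a unit. *)

Section MPolyInduction.
Variables (R : comNzRingType) (k : nat).

Lemma mpoly_ind_closed (P : {mpoly R[k]} -> Prop) :
  (forall c, P c%:MP) -> (forall i, P 'X_i) ->
  (forall p q, P p -> P q -> P (p + q)) ->
  (forall p q, P p -> P q -> P (p * q)) ->
  forall p, P p.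
Proof.
move=> PC PX PD PM.
have PXn i e : P ('X_i ^+ e).
  elim: e => [|e IH]; first by rewrite expr0 -mpolyC1.
  by rewrite exprS; apply: PM.
have PXm mm : P 'X_[mm].
  rewrite mpolyXE_id; elim: (index_enum _) => [|j r IH]; last first.
    by rewrite big_cons; apply: PM.
  by rewrite big_nil -mpolyC1.
elim/mpolyind => [|c mm p _ _ IH]; first by rewrite -mpolyC0.
by apply: PD => //; rewrite -mul_mpolyC; apply: PM.
Qed.

Lemma mpoly_rmorph_eq (S : nzRingType) (f g : {rmorphism {mpoly R[k]} -> S}) :
  (forall c, f c%:MP = g c%:MP) -> (forall i, f 'X_i = g 'X_i) -> f =1 g.
Proof.
move=> eC eX; apply: mpoly_ind_closed => // p q ep eq.
  by rewrite !rmorphD ep eq.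
by rewrite !rmorphM ep eq.
Qed.

Lemma comp_mpolyX_mktuple l (f : 'I_k -> {mpoly R[l]}) i :
  'X_i \mPo [tuple f j | j < k] = f i.
Proof. by rewrite comp_mpolyXU -tnth_nth tnth_mktuple. Qed.

End MPolyInduction.

Lemma msize_nonunit (F : fieldType) (k : nat) (d : {mpoly F[k]}) :
  d != 0 -> d \isn't a GRing.unit -> (1 < msize d)%N.
Proof.
move=> d_neq0; apply: contraR; rewrite -leqNgt => /msize1_polyC d_const.
have d0_neq0 : d@_0 != 0 by apply: contraNneq d_neq0 => d0; rewrite d_const d0.
by rewrite unfold_in /= /mpoly_unit -d_const eqxx unitfE.
Qed.

Lemma msize_mul_nonunit (F : fieldType) (k : nat) (d b : {mpoly F[k]}) :
  d != 0 -> d \isn't a GRing.unit -> b != 0 -> (msize b < msize (d * b))%N.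
Proof.
move=> d_neq0 d_nonunit b_neq0; rewrite msizeM //.
move: (msize_nonunit d_neq0 d_nonunit); case: (msize d) => [|[|s]] // _.
by rewrite addSn /= addSn ltnS leq_addl.
Qed.

Lemma split_lshift (n m : nat) (a : 'I_n) : split (lshift m a) = inl a.
Proof. exact: (unsplitK (inl a)). Qed.

Lemma split_rshift (n m : nat) (b : 'I_m) : split (rshift n b) = inr b.
Proof. exact: (unsplitK (inr b)). Qed.

Section Substitution.
Variables (F : fieldType) (n m : nat).

Notation liftx := (@liftx F n m).
Notation yvar := (@yvar F n m).

HB.instance Definition _ :=
  GRing.RMorphism.copy liftx (comp_mpoly [tuple @xvar F n m i | i < n]).

Definition subst_y_tuple (v : 'I_m -> {mpoly F[n]}) : (n + m).-tuple {mpoly F[n]} :=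
  [tuple match split i with inl a => 'X_a | inr b => v b end | i < n + m].

Definition subst_y (v : 'I_m -> {mpoly F[n]}) (p : {mpoly F[n + m]}) :
  {mpoly F[n]} := p \mPo subst_y_tuple v.

HB.instance Definition _ v :=
  GRing.RMorphism.copy (subst_y v) (comp_mpoly (subst_y_tuple v)).

Lemma subst_yFE (Fs : 'I_m -> {mpoly F[n]}) p : subst_yF Fs p = subst_y Fs p.
Proof. by []. Qed.

Lemma subst_y0E p : subst_y0 p = subst_y (fun=> 0) p.
Proof. by []. Qed.

Lemma subst_y_xvar v i : subst_y v (@xvar F n m i) = 'X_i.
Proof.
by rewrite /subst_y /xvar comp_mpolyX_mktuple split_lshift.
Qed.

Lemma subst_y_yvar v j : subst_y v (yvar j) = v j.
Proof.
by rewrite /subst_y /yvar comp_mpolyX_mktuple split_rshift.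
Qed.

Lemma liftxK v : cancel liftx (subst_y v).
Proof.
apply: (mpoly_rmorph_eq (f := (subst_y v \o liftx)%FUN) (g := idfun)) => [c|i] /=.
  by rewrite /liftx comp_mpolyC /subst_y comp_mpolyC.
by rewrite /liftx comp_mpolyX_mktuple subst_y_xvar.
Qed.

Lemma liftx_eq0 q : (liftx q == 0) = (q == 0).
Proof. exact: (raddf_eq0 _ (can_inj (liftxK (fun=> 0)))). Qed.

Definition hilbert_num (Gs : 'I_m -> {mpoly F[n]}) : {mpoly F[n + m]} :=
  \sum_(i < m) yvar i * liftx (Gs i).

Lemma subst_y_hilbert_num v Gs :
  subst_y v (hilbert_num Gs) = \sum_(i < m) v i * Gs i.
Proof.
rewrite rmorph_sum; apply: eq_bigr => i _.
by rewrite rmorphM /= subst_y_yvar liftxK.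
Qed.

Lemma subst_y_delta_hilbert_num Gs i :
  subst_y (fun j => (j == i)%:R) (hilbert_num Gs) = Gs i.
Proof.
rewrite subst_y_hilbert_num (bigD1 i) //= eqxx mul1r big1 ?addr0 //.
by move=> j /negbTE ->; rewrite mul0r.
Qed.

Definition in_ideal (v : 'I_m -> {mpoly F[n]}) (q : {mpoly F[n]}) : Prop :=
  exists Gs : 'I_m -> {mpoly F[n]}, q = \sum_(i < m) v i * Gs i.

Lemma in_ideal0 v : in_ideal v 0.
Proof. by exists (fun=> 0); rewrite big1 // => i _; rewrite mulr0. Qed.

Lemma in_idealD v p q : in_ideal v p -> in_ideal v q -> in_ideal v (p + q).
Proof.
move=> [Gp ->] [Gq ->]; exists (fun i => Gp i + Gq i).
by rewrite -big_split; apply: eq_bigr => i _; rewrite mulrDr.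
Qed.

Lemma in_idealMl v c q : in_ideal v q -> in_ideal v (c * q).
Proof.
move=> [Gq ->]; exists (fun i => c * Gq i).
by rewrite mulr_sumr; apply: eq_bigr => i _; rewrite mulrCA.
Qed.

Lemma subst_y_sub_subst_y0 v p :
  in_ideal v (subst_y v p - subst_y (fun=> 0) p).
Proof.
elim/mpoly_ind_closed: p => [c|i|p q ihp ihq|p q ihp ihq].
- by rewrite /subst_y !comp_mpolyC subrr; apply: in_ideal0.
- rewrite /subst_y !comp_mpolyX_mktuple -[i]splitK.
  case: (split i) => [a|b]; rewrite unsplitK ?subrr; first exact: in_ideal0.
  exists (fun j => (j == b)%:R); rewrite subr0 (bigD1 b) //= eqxx mulr1.
  by rewrite big1 ?addr0 // => j /negbTE ->; rewrite mulr0.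
- by rewrite !rmorphD /= opprD addrACA; apply: in_idealD.
- rewrite !rmorphM /=.
  have -> : forall x y z w : {mpoly F[n]}, x * y - z * w = x * (y - w) + w * (x - z).
    by move=> x y z w; ring.
  by apply: in_idealD; apply: in_idealMl.
Qed.

(* Multiplying every y_j by a new variable t grades polynomials by total degree in y. *)
Definition ydilate_var (i : 'I_(n + m)) : {poly {mpoly F[n + m]}} :=
  if split i is inr _ then ('X_i)%:P * 'X else ('X_i)%:P.

Definition ydilate (p : {mpoly F[n + m]}) : {poly {mpoly F[n + m]}} :=
  mmap (polyC \o (@mpolyC (n + m) F))%FUN ydilate_var p.

HB.instance Definition _ := GRing.RMorphism.copy ydilate
  (mmap (polyC \o (@mpolyC (n + m) F))%FUN ydilate_var).

Lemma ydilateC c : ydilate c%:MP = (c%:MP)%:P.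
Proof. by rewrite /ydilate mmapC. Qed.

Lemma ydilateX i : ydilate 'X_i = ydilate_var i.
Proof. by rewrite /ydilate mmapX mmap1U. Qed.

Lemma ydilate_liftx q : ydilate (liftx q) = (liftx q)%:P.
Proof.
apply: (mpoly_rmorph_eq (f := (ydilate \o liftx)%FUN) (g := (polyC \o liftx)%FUN))
  => [c|a] /=; first by rewrite /liftx !comp_mpolyC ydilateC.
by rewrite /liftx comp_mpolyX_mktuple /xvar ydilateX /ydilate_var split_lshift.
Qed.

Lemma horner1_ydilate p : (ydilate p).[1] = p.
Proof.
apply: (mpoly_rmorph_eq (f := (horner_eval 1 \o ydilate)%FUN) (g := idfun))
  => [c|i] /=; first by rewrite ydilateC horner_evalE hornerC.
rewrite ydilateX horner_evalE /ydilate_var.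
by case: (split i) => _; rewrite ?hornerMX hornerC ?mulr1.
Qed.

Lemma horner0_ydilate p : (ydilate p).[0] = liftx (subst_y0 p).
Proof.
apply: (mpoly_rmorph_eq (f := (horner_eval 0 \o ydilate)%FUN)
                        (g := (liftx \o @subst_y0 F n m)%FUN)) => [c|i] /=.
  by rewrite ydilateC horner_evalE hornerC /liftx !comp_mpolyC.
rewrite ydilateX horner_evalE /ydilate_var comp_mpolyX_mktuple.
rewrite -[i]splitK; case: (split i) => [a|b]; rewrite unsplitK.
  by rewrite hornerC /liftx comp_mpolyX_mktuple.
by rewrite hornerMX mulr0 rmorph0.
Qed.

Lemma factor_liftx d a q :
  d * a = liftx q -> q != 0 -> d = liftx (subst_y0 d).
Proof.
move=> da_eq q_neq0.
have : size (ydilate d * ydilate a) == 1%N.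
  by rewrite -rmorphM /= da_eq ydilate_liftx size_polyC liftx_eq0 q_neq0.
rewrite size_mul_eq1 => /andP [/eqP/eq_leq/size1_polyC d_const _].
by rewrite -{1}[d]horner1_ydilate -horner0_ydilate d_const !hornerC.
Qed.

Lemma common_factor_hilbert_num d a b Gs D0 :
  d * a = hilbert_num Gs -> d * b = liftx D0 -> D0 != 0 ->
  exists2 d' : {mpoly F[n]}, d = liftx d' &
    D0 = d' * subst_y0 b /\
    forall i, Gs i = d' * subst_y (fun j => (j == i)%:R) a.
Proof.
move=> da db D0_neq0; have d_eq := factor_liftx db D0_neq0.
exists (subst_y0 d) => //; split; first by rewrite -(liftxK (fun=> 0) D0) -db rmorphM.
by move=> i; rewrite -(subst_y_delta_hilbert_num Gs i) -da rmorphM /= {1}d_eq liftxK.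
Qed.

End Substitution.

Lemma leq_msize_mull (F : fieldType) (k : nat) (d b : {mpoly F[k]}) :
  d != 0 -> (msize b <= msize (d * b))%N.
Proof.
move=> d_neq0; have [-> | b_neq0] := eqVneq b 0; first by rewrite mulr0.
rewrite msizeM //; move: d_neq0; rewrite -msize_poly_eq0.
by case: (msize d) => [|s] // _; rewrite addSn leq_addl.
Qed.

Section Certificates.
Variables (F : fieldType) (L : closedFieldType) (iota : {rmorphism F -> L}).
Variables (n m : nat) (G : {mpoly F[n]}) (Fs : 'I_m -> {mpoly F[n]}).

Definition hilbert_data (D0 : {mpoly F[n]}) (Gs : 'I_m -> {mpoly F[n]}) : Prop :=
  [/\ D0 != 0,
      inv_const G -> (msize D0 <= 1)%N,
      ~ inv_const G -> forall Z, irr_component (variety iota Fs) Z ->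
        exists z, Z z /\ (map_mpoly iota D0).@[z] != 0
    & G * D0 = \sum_(i < m) Fs i * Gs i].

Lemma hilbert_data_of_cert Cn D :
  RIPS_cert iota G Fs Cn D -> exists Gs, hilbert_data (subst_yF Fs D) Gs.
Proof.
case=> _ _ [D_const D_nonvanishing] [_ Cn_y0] [sFD_neq0 Cn_yF].
have [Gs Gs_eq] := subst_y_sub_subst_y0 Fs Cn.
exists Gs; split => //.
  move=> /D_const [d ->]; rewrite subst_yFE /subst_y comp_mpolyC msizeC.
  by case: (d != 0).
by rewrite -Cn_yF -Gs_eq -subst_y0E Cn_y0 subr0.
Qed.

Lemma cert_of_hilbert_data D0 Gs :
  hilbert_data D0 Gs -> rel_prime (hilbert_num Gs) (liftx m D0) ->
  RIPS_cert iota G Fs (hilbert_num Gs) (liftx m D0) /\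
  hilbert_like (hilbert_num Gs) (liftx m D0).
Proof.
case=> D0_neq0 D0_const D0_nonvanishing D0_eq coprime.
have yF_D0 : subst_yF Fs (liftx m D0) = D0 by rewrite subst_yFE liftxK.
split; last by exists D0, Gs; split => //; rewrite mulrC.
split => //.
- by rewrite liftx_eq0.
- split; last by rewrite yF_D0.
  move=> /D0_const /msize1_polyC D0E; exists D0@_0.
  by rewrite {1}D0E /liftx comp_mpolyC.
- rewrite !subst_y0E liftxK subst_y_hilbert_num; split => //.
  by rewrite big1 // => i _; rewrite mul0r.
- by rewrite yF_D0 subst_yFE subst_y_hilbert_num -D0_eq.
Qed.

Lemma hilbert_data_cancel d D0 Gs Gs' :
  hilbert_data (d * D0) Gs -> (forall i, Gs i = d * Gs' i) -> hilbert_data D0 Gs'.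
Proof.
case=> dD0_neq0 dD0_const dD0_nonvanishing dD0_eq Gs_eq.
move: (dD0_neq0); rewrite mulf_eq0 negb_or => /andP [d_neq0 D0_neq0].
split => //.
- by move=> /dD0_const; apply: leq_trans; apply: leq_msize_mull.
- move=> nG Z Z_comp; have [z [Zz nz]] := dD0_nonvanishing nG Z Z_comp.
  exists z; split => //; apply: contraNneq nz.
  by rewrite rmorphM /= mevalM => ->; rewrite mulr0.
- apply: (mulfI d_neq0); rewrite mulrCA dD0_eq mulr_sumr.
  by apply: eq_bigr => i _; rewrite Gs_eq mulrCA.
Qed.

Lemma hilbert_data_reduce D0 Gs :
  hilbert_data D0 Gs -> ~ rel_prime (hilbert_num Gs) (liftx m D0) ->
  exists D1 Gs1, hilbert_data D1 Gs1 /\ (msize D1 < msize D0)%N.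
Proof.
move=> hd not_coprime.
have [d [[a da] [b db] d_nonunit]] : exists d : {mpoly F[n + m]},
    [/\ exists a, hilbert_num Gs = d * a, exists b, liftx m D0 = d * b
       & d \isn't a GRing.unit].
  apply: NNPP => no_factor; apply: not_coprime => d da db.
  by apply: NNPP => /negP d_nonunit; apply: no_factor; exists d.
have D0_neq0 : D0 != 0 by case: hd.
have [d' d_eq [D0_eq Gs_eq]] :=
  common_factor_hilbert_num (esym da) (esym db) D0_neq0.
move: (D0_neq0); rewrite D0_eq mulf_eq0 negb_or => /andP [d'_neq0 b'_neq0].
rewrite D0_eq in hd *.
exists (subst_y0 b), (fun i => subst_y (fun j => (j == i)%:R) a).
split; first exact: hilbert_data_cancel hd Gs_eq.
apply: msize_mul_nonunit => //.
by apply: contra d_nonunit; rewrite d_eq; apply: rmorph_unit.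
Qed.

Lemma hilbert_data_coprime D0 Gs :
  hilbert_data D0 Gs ->
  exists D1 Gs1, hilbert_data D1 Gs1 /\ rel_prime (hilbert_num Gs1) (liftx m D1).
Proof.
have [k] := ubnP (msize D0); elim: k D0 Gs => // k IH D0 Gs size_lt hd.
have [coprime | not_coprime] := classic (rel_prime (hilbert_num Gs) (liftx m D0)).
  by exists D0, Gs.
have [D1 [Gs1 [hd1 lt1]]] := hilbert_data_reduce hd not_coprime.
exact: IH (leq_trans lt1 size_lt) hd1.
Qed.

End Certificates.

Theorem lemmaB9 (F : fieldType) (L : closedFieldType)
  (iota : {rmorphism F -> L}) (n m : nat)
  (G : {mpoly F[n]}) (Fs : 'I_m -> {mpoly F[n]}) :
  is_alg_closure iota ->
  (exists Cn D : {mpoly F[n + m]}, RIPS_cert iota G Fs Cn D) ->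
  exists Cn D : {mpoly F[n + m]},
    RIPS_cert iota G Fs Cn D /\ hilbert_like Cn D.
Proof.
move=> _ [Cn [D cert]].
have [Gs hd] := hilbert_data_of_cert cert.
have [D0 [Gs0 [hd0 coprime]]] := hilbert_data_coprime hd.
by exists (hilbert_num Gs0), (liftx m D0); apply: cert_of_hilbert_data.
Qed.
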